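(* Let $G$ be a just infinite group that is not virtually abelian, let $Y$ be a finite set, let $H\le G^Y$ be an infra-direct product, and let $U\subseteq Y$ be minimal such that the restriction of $\psi_U$ to $H$, $H\to G^U$, is injective. Then for every finite index subgroup $L\le H$, $U$ is also minimal such that the restriction of $\psi_U$ to $L$, $L\to G^U$, is injective.
   Context: $G^Y$ is the direct product of copies of $G$ indexed by $Y$; for $y\in Y$, $\psi_y$ is the projection onto the $y$-th coordinate and for $U\subseteq Y$, $\psi_U=(\psi_u)_{u\in U}:G^Y\to G^U$. $H\le G^Y$ is an infra-direct product if $\psi_y(H)$ has finite index in $G$ for every $y\in Y$. A group is just infinite if it is infinite and every proper quotient is finite. *)

From Stdlib Require Import List FunctionalExtensionality.
From mathcomp Require Import all_boot.
Set Implicit Arguments. Unset Strict Implicit. Unset Printing Implicit Defensive.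

Record grp := Grp {
  gT :> Type;
  gmul : gT -> gT -> gT;
  ginv : gT -> gT;
  gone : gT;
  gmulA : forall x y z, gmul x (gmul y z) = gmul (gmul x y) z;
  gmul1 : forall x, gmul gone x = x;
  gmulr1 : forall x, gmul x gone = x;
  gmulV : forall x, gmul (ginv x) x = gone;
  gmulrV : forall x, gmul x (ginv x) = gone
}.

Definition pow_grp (G : grp) (Y : Type) : grp.
Proof.
refine (@Grp (Y -> gT G) (fun f g y => gmul (f y) (g y))
  (fun f y => ginv (f y)) (fun _ => gone G) _ _ _ _ _);
  intros; apply functional_extensionality; intro i.
- apply gmulA. - apply gmul1. - apply gmulr1. - apply gmulV. - apply gmulrV.
Defined.

Definition subgroup (G : grp) (H : G -> Prop) : Prop :=
  H (gone G) /\ (forall x y, H x -> H y -> H (gmul x y)) /\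
  (forall x, H x -> H (ginv x)).

(* K <= H and K has finite index in H: finitely many left cosets of K
   cover H. *)
Definition finite_index (G : grp) (K H : G -> Prop) : Prop :=
  (forall x, K x -> H x) /\
  exists s : list (gT G), forall h, H h ->
    exists2 x, In x s & exists k, K k /\ h = gmul x k.

Definition full (G : grp) : G -> Prop := fun _ => True.

Definition normal (G : grp) (N : G -> Prop) : Prop :=
  subgroup N /\ forall g n, N n -> N (gmul (gmul (ginv g) n) g).

Definition infinite_grp (G : grp) : Prop :=
  ~ exists s : list (gT G), forall g : gT G, In g s.

(* Just infinite: infinite, and every proper quotient G/N (N nontrivial
   normal subgroup) is finite, i.e. N has finite index in G. *)
Definition just_infinite (G : grp) : Prop :=
  infinite_grp G /\
  forall N : G -> Prop, normal N -> (exists n, N n /\ n <> gone G) ->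
    finite_index N (@full G).

Definition virtually_abelian (G : grp) : Prop :=
  exists A : G -> Prop, subgroup A /\ finite_index A (@full G) /\
    forall a b, A a -> A b -> gmul a b = gmul b a.

Definition proj_image (G : grp) (Y : Type) (H : pow_grp G Y -> Prop) (y : Y)
  : G -> Prop := fun g => exists h, H h /\ h y = g.

Definition infra_direct (G : grp) (Y : Type) (H : pow_grp G Y -> Prop) : Prop :=
  subgroup H /\ forall y, finite_index (proj_image H y) (@full G).

Definition psi_inj_on (G : grp) (Y : finType) (H : pow_grp G Y -> Prop)
  (U : {set Y}) : Prop :=
  forall h h' : pow_grp G Y, H h -> H h' ->
    (forall u, u \in U -> h u = h' u) -> h = h'.

Definition minimal_inj (G : grp) (Y : finType) (H : pow_grp G Y -> Prop)
  (U : {set Y}) : Prop :=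
  psi_inj_on H U /\ forall V : {set Y}, V \proper U -> ~ psi_inj_on H V.

(* Minimality of U transfers from H to L as soon as injectivity of any psi_V
   transfers. Suppose psi_V is injective on L but kills some k != 1 in H. The
   kernel of psi_V on H is normal in H and meets L trivially, so it is finite,
   L having finite index in H. Hence a nontrivial coordinate a = k u has only
   finitely many conjugates under psi_u(H), and therefore under G. The
   centraliser of all conjugates of a then has finite index, as does the normal
   closure N of a since G is just infinite; their intersection is an abelian
   subgroup of finite index, contradicting that G is not virtually abelian. *)
From mathcomp Require Import all_boot.
From Stdlib Require Import List Classical FunctionalExtensionality.
Set Implicit Arguments. Unset Strict Implicit. Unset Printing Implicit Defensive.

Lemma finite_representatives (X D : Type) (S : X -> Prop) (R : X -> D -> Prop)
    (l : list D) :
  (forall x, S x -> exists2 d, In d l & R x d) ->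
  exists reps : list X, (forall r, In r reps -> S r) /\
    forall x, S x -> exists r d, [/\ In r reps, R r d & R x d].
Proof.
move=> cover.
suff [reps [repsS repsP]] : exists reps : list X,
    (forall r, In r reps -> S r) /\
    forall x, S x -> (exists2 d, In d l & R x d) ->
      exists r d, [/\ In r reps, R r d & R x d].
  by exists reps; split=> // x Sx; apply: repsP (cover x Sx).
clear cover; elim: l => [|d l [reps [repsS repsP]]].
  by exists nil; split=> // x _ [].
have [[r0 [Sr0 Rr0]] | noRd] := classic (exists r, S r /\ R r d).
- exists (r0 :: reps); split=> [r /= [<- //|/repsS //]|x Sx [d' /= dd' Rd']].
  case: dd' => [ed|ld'].
    by exists r0, d; split; [left | | rewrite ed].
  have [r [d'' [rin Rr Rx]]] := repsP x Sx (ex_intro2 _ _ d' ld' Rd').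
  by exists r, d''; split; first right.
- exists reps; split=> // x Sx [d' /= [ed|ld'] Rd'].
    by case: noRd; exists x; rewrite ed.
  exact: repsP x Sx (ex_intro2 _ _ d' ld' Rd').
Qed.

Section GroupTheory.
Variable G : grp.
Implicit Types x y z c g h : gT G.

Lemma mulKg x y : gmul (ginv x) (gmul x y) = y.
Proof. by rewrite gmulA gmulV gmul1. Qed.

Lemma mulKVg x y : gmul x (gmul (ginv x) y) = y.
Proof. by rewrite gmulA gmulrV gmul1. Qed.

Lemma mulgKV x y : gmul (gmul x (ginv y)) y = x.
Proof. by rewrite -gmulA gmulV gmulr1. Qed.

Lemma invg_uniq x y : gmul x y = gone G -> y = ginv x.
Proof. by move=> xy1; rewrite -(mulKg x y) xy1 gmulr1. Qed.

Lemma invgK x : ginv (ginv x) = x.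
Proof. by symmetry; apply: invg_uniq; apply: gmulV. Qed.

Lemma invMg x y : ginv (gmul x y) = gmul (ginv y) (ginv x).
Proof. by symmetry; apply: invg_uniq; rewrite -gmulA mulKVg gmulrV. Qed.

Lemma invg1 : ginv (gone G) = gone G.
Proof. by symmetry; apply: invg_uniq; apply: gmul1. Qed.

Definition gconj x c := gmul (gmul x c) (ginv x).

Lemma gconj1 c : gconj (gone G) c = c.
Proof. by rewrite /gconj gmul1 invg1 gmulr1. Qed.

Lemma gconjg1 x : gconj x (gone G) = gone G.
Proof. by rewrite /gconj gmulr1 gmulrV. Qed.

Lemma gconjM x y c : gconj (gmul x y) c = gconj x (gconj y c).
Proof. by rewrite /gconj invMg !gmulA. Qed.

Lemma gconjgM x c z : gconj x (gmul c z) = gmul (gconj x c) (gconj x z).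
Proof. by rewrite /gconj !gmulA mulgKV. Qed.

Lemma gconjgV x c : gconj x (ginv c) = ginv (gconj x c).
Proof. by rewrite /gconj !invMg invgK !gmulA. Qed.

Lemma gconjK x c : gconj (ginv x) (gconj x c) = c.
Proof. by rewrite -gconjM gmulV gconj1. Qed.

Lemma gconj_commute x y : gconj x y = y -> gmul x y = gmul y x.
Proof. by move=> xy; rewrite -{2}xy /gconj mulgKV. Qed.

Lemma subgroup_ldiv (C : G -> Prop) x g g' : subgroup C ->
  C (gmul (ginv x) g) -> C (gmul (ginv x) g') -> C (gmul (ginv g) g').
Proof.
move=> [_ [CM CV]] Cg Cg'.
have := CM _ _ (CV _ Cg) Cg'.
by rewrite invMg invgK -gmulA mulKVg.
Qed.

Lemma subgroupI (A B : G -> Prop) :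
  subgroup A -> subgroup B -> subgroup (fun g => A g /\ B g).
Proof.
move=> [A1 [AM AV]] [B1 [BM BV]]; split=> //; split.
  by move=> x y [Ax Bx] [Ay By]; split; [apply: AM | apply: BM].
by move=> x [Ax Bx]; split; [apply: AV | apply: BV].
Qed.

Lemma subgroup_bigcap (I : Type) (P : I -> Prop) (A : I -> G -> Prop) :
  (forall i, P i -> subgroup (A i)) -> subgroup (fun g => forall i, P i -> A i g).
Proof.
move=> sA; split; first by move=> i /sA [].
split=> [x y Ax Ay i Pi | x Ax i Pi]; have [_ [AM AV]] := sA i Pi.
  exact: AM (Ax i Pi) (Ay i Pi).
exact: AV (Ax i Pi).
Qed.

Lemma finite_index_of_finite_cover (C M : G -> Prop) (D : Type)
    (R : G -> D -> Prop) (l : list D) :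
  (forall h, C h -> M h) ->
  (forall h, M h -> exists2 d, In d l & R h d) ->
  (forall h h' d, M h -> M h' -> R h d -> R h' d -> C (gmul (ginv h) h')) ->
  finite_index C M.
Proof.
move=> CM cover sameC; split=> //.
have [reps [repsM repsP]] := finite_representatives cover.
exists reps => h Mh; have [r [d [rin Rr Rh]]] := repsP h Mh.
exists r => //; exists (gmul (ginv r) h).
by split; [apply: sameC (repsM r rin) Mh Rr Rh | rewrite mulKVg].
Qed.

Lemma finite_indexI (A B M : G -> Prop) : subgroup A -> subgroup B ->
  finite_index A M -> finite_index B M -> finite_index (fun g => A g /\ B g) M.
Proof.
move=> sA sB [AM [sa coverA]] [_ [sb coverB]].
apply: (finite_index_of_finite_cover (l := list_prod sa sb)
  (R := fun h p => A (gmul (ginv p.1) h) /\ B (gmul (ginv p.2) h))).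
- by move=> h [/AM].
- move=> h Mh; have [x xin [a [Aa ha]]] := coverA h Mh.
  have [y yin [b [Bb hb]]] := coverB h Mh.
  exists (x, y); first exact: in_prod.
  by rewrite /= {1}ha hb !mulKg.
- move=> h h' [x y] _ _ [Ah Bh] [Ah' Bh'].
  by split; [apply: subgroup_ldiv sA Ah Ah' | apply: subgroup_ldiv sB Bh Bh'].
Qed.

Lemma finite_index_full_mono (B A : G -> Prop) :
  (forall g, B g -> A g) -> finite_index B (@full G) -> finite_index A (@full G).
Proof.
move=> BA [_ [s cover]]; split=> //; exists s => h _.
by have [x xs [b [Bb hb]]] := cover h I; exists x => //; exists b; auto.
Qed.

Lemma finite_index_bigcap (I : Type) (A : I -> G -> Prop) (W : list I) :
  (forall i, subgroup (A i)) -> (forall i, finite_index (A i) (@full G)) ->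
  finite_index (fun g => forall i, In i W -> A i g) (@full G).
Proof.
move=> sA fiA; elim: W => [|i W fiW].
  split=> //; exists [:: gone G] => h _.
  by exists (gone G); [left | exists h; rewrite gmul1].
have sW := subgroup_bigcap (fun j (_ : In j W) => sA j).
apply: finite_index_full_mono (finite_indexI (sA i) sW (fiA i) fiW).
by move=> g [Ag AWg] j /= [<- | /AWg].
Qed.

Lemma finite_of_trivial_meet (K L H : G -> Prop) :
  subgroup K -> subgroup L -> (forall k, K k -> H k) -> finite_index L H ->
  (forall g, K g -> L g -> g = gone G) ->
  exists s : list (gT G), forall k, K k -> In k s.
Proof.
move=> sK sL KH [_ [sl cover]] KL1.
have [reps [repsK repsP]] :
    exists reps, (forall r, In r reps -> K r) /\ forall k, K k ->
      exists r x, [/\ In r reps, L (gmul (ginv x) r) & L (gmul (ginv x) k)].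
  apply: (finite_representatives (l := sl)) => k /KH /cover [x xin [l [Ll ->]]].
  by exists x => //; rewrite mulKg.
exists reps => k Kk; have [r [x [rin Lr Lk]]] := repsP k Kk.
have [_ [KM KV]] := sK.
have rk1 := KL1 _ (KM _ _ (KV _ (repsK r rin)) Kk) (subgroup_ldiv sL Lr Lk).
by rewrite -(mulKVg r k) rk1 gmulr1.
Qed.

Definition centralizer c : G -> Prop := fun g => gconj g c = c.

Definition finite_class c := exists s : list (gT G), forall g, In (gconj g c) s.

Lemma subgroup_centralizer c : subgroup (centralizer c).
Proof.
split; first exact: gconj1.
split=> [x y cx cy | x cx]; rewrite /centralizer.
  by rewrite gconjM cy cx.
by rewrite -{1}cx gconjK.
Qed.

Lemma centralizer_finite_index c :
  finite_class c -> finite_index (centralizer c) (@full G).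
Proof.
move=> [s cls].
apply: (finite_index_of_finite_cover (R := fun g d => gconj g c = d) (l := s)) => //.
  by move=> g _; exists (gconj g c).
by move=> g g' d _ _ <- gg'; rewrite /centralizer gconjM gg' gconjK.
Qed.

Lemma finite_class_conj t c : finite_class c -> finite_class (gconj t c).
Proof. by move=> [s cls]; exists s => g; rewrite -gconjM. Qed.

Lemma finite_class_of_finite_index (P : G -> Prop) c : finite_index P (@full G) ->
  (exists s, forall p, P p -> In (gconj p c) s) -> finite_class c.
Proof.
move=> [_ [sp cover]] [s cls].
exists (flat_map (fun x => map (gconj x) s) sp) => g.
have [x xin [p [Pp ->]]] := cover g I.
by apply/in_flat_map; exists x; split; rewrite // gconjM; apply: in_map; apply: cls.
Qed.

Inductive normal_closure (a : gT G) : G -> Prop :=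
| nclosure1 : normal_closure a (gone G)
| nclosureJ t : normal_closure a (gconj t a)
| nclosureM x y : normal_closure a x -> normal_closure a y ->
    normal_closure a (gmul x y)
| nclosureV x : normal_closure a x -> normal_closure a (ginv x).

Lemma normal_closure_self a : normal_closure a a.
Proof. by have := nclosureJ a (gone G); rewrite gconj1. Qed.

Lemma normal_closure_conj a t n : normal_closure a n -> normal_closure a (gconj t n).
Proof.
elim=> [|s|x y _ Nx _ Ny|x _ Nx].
- by rewrite gconjg1; apply: nclosure1.
- by rewrite -gconjM; apply: nclosureJ.
- by rewrite gconjgM; apply: nclosureM.
- by rewrite gconjgV; apply: nclosureV.
Qed.

Lemma normal_normal_closure a : normal (normal_closure a).
Proof.
split; first by split; [apply: nclosure1 | split; [apply: nclosureM | apply: nclosureV]].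
move=> g n Nn; have -> : gmul (gmul (ginv g) n) g = gconj (ginv g) n.
  by rewrite /gconj invgK.
exact: normal_closure_conj.
Qed.

Lemma centralizes_normal_closure a x n :
  (forall t, centralizer (gconj t a) x) -> normal_closure a n ->
  gmul x n = gmul n x.
Proof.
move=> xa Nn; apply: gconj_commute; elim: Nn => [|t|y z _ xy _ xz|y _ xy].
- exact: gconjg1.
- exact: xa.
- by rewrite gconjgM xy xz.
- by rewrite gconjgV xy.
Qed.

Lemma virtually_abelian_of_finite_class a :
  just_infinite G -> a <> gone G -> finite_class a -> virtually_abelian G.
Proof.
move=> [_ finN] a1 fca; have [s cls] := fca.
have [W [_ WP]] := finite_representatives (S := fun _ => True) (l := s)
  (R := fun g c => gconj g a = c) (fun g _ => ex_intro2 _ _ (gconj g a) (cls g) erefl).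
set Z := fun g => forall w, In w W -> centralizer (gconj w a) g.
have sZ : subgroup Z := subgroup_bigcap (fun w _ => subgroup_centralizer _).
have fiZ : finite_index Z (@full G) := finite_index_bigcap W
  (fun w => subgroup_centralizer _)
  (fun w => centralizer_finite_index (finite_class_conj w fca)).
have [sN _] := normal_normal_closure a.
have fiN := finN _ (normal_normal_closure a)
  (ex_intro _ a (conj (normal_closure_self a) a1)).
exists (fun g => Z g /\ normal_closure a g).
split; [exact: subgroupI | split; [exact: finite_indexI|]].
move=> x y [Zx _] [_ Ny]; apply: centralizes_normal_closure Ny => t.
by have [w [_ [win <- ->]]] := WP t I; apply: Zx.
Qed.

End GroupTheory.

Section DirectPower.
Variables (G : grp) (Y : finType).
Implicit Types (H L : pow_grp G Y -> Prop) (V : {set Y}).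

Lemma pow_mulE (f g : pow_grp G Y) y : gmul f g y = gmul (f y) (g y).
Proof. by []. Qed.

Lemma pow_invE (f : pow_grp G Y) y : ginv f y = ginv (f y).
Proof. by []. Qed.

Lemma pow_conjE (f g : pow_grp G Y) y : gconj f g y = gconj (f y) (g y).
Proof. by []. Qed.

Lemma pow_ext (f g : pow_grp G Y) : (forall y, f y = g y) -> f = g.
Proof. exact: functional_extensionality. Qed.

Definition psi_ker H V : pow_grp G Y -> Prop :=
  fun k => H k /\ forall v, v \in V -> k v = gone G.

Lemma subgroup_psi_ker H V : subgroup H -> subgroup (psi_ker H V).
Proof.
move=> [H1 [HM HV]]; split; first by split.
split=> [x y [Hx x1] [Hy y1] | x [Hx x1]]; split=> [|v vV].
- exact: HM.
- by rewrite pow_mulE x1 // y1 // gmul1.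
- exact: HV.
- by rewrite pow_invE x1 // invg1.
Qed.

Lemma psi_ker_conj H V h k :
  subgroup H -> H h -> psi_ker H V k -> psi_ker H V (gconj h k).
Proof.
move=> [_ [HM HV]] Hh [Hk k1]; split=> [|v vV].
  exact: HM (HM _ _ Hh Hk) (HV _ Hh).
by rewrite pow_conjE k1 // gconjg1.
Qed.

Lemma psi_inj_on_kerP H V : subgroup H ->
  psi_inj_on H V <-> forall k, psi_ker H V k -> k = gone _.
Proof.
move=> [H1 [HM HV]]; split.
  by move=> inj k [Hk k1]; apply: inj => // v vV; rewrite k1.
move=> ker1 h h' Hh Hh' hh'.
have hh'1 : psi_ker H V (gmul (ginv h) h').
  by split=> [|v vV]; [exact: HM (HV _ Hh) Hh' | rewrite pow_mulE pow_invE hh'// gmulV].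
by rewrite -(mulKVg h h') (ker1 _ hh'1) gmulr1.
Qed.

Lemma psi_inj_on_of_finite_index H L V :
  just_infinite G -> ~ virtually_abelian G -> infra_direct H ->
  subgroup L -> finite_index L H -> psi_inj_on L V -> psi_inj_on H V.
Proof.
move=> Gji Gnva [sH fiP] sL fiL /(psi_inj_on_kerP _ sL) kerL.
apply/(psi_inj_on_kerP _ sH) => k kerk; apply: pow_ext => u.
apply: NNPP => ku; apply: Gnva; apply: (virtually_abelian_of_finite_class Gji ku).
have [s kers] : exists s, forall k, psi_ker H V k -> In k s.
  apply: finite_of_trivial_meet (subgroup_psi_ker V sH) sL _ fiL _.
    by move=> k' [].
  by move=> g [_ g1] Lg; apply: kerL.
apply: (finite_class_of_finite_index (fiP u)); exists (map (fun k => k u) s).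
move=> _ [h [Hh <-]]; rewrite -pow_conjE; apply: (in_map (fun k => k u)).
exact/kers/psi_ker_conj.
Qed.

End DirectPower.

Theorem lemma3p2 (G : grp) (Y : finType) (H : pow_grp G Y -> Prop)
  (U : {set Y}) :
  just_infinite G -> ~ virtually_abelian G ->
  infra_direct H -> minimal_inj H U ->
  forall L : pow_grp G Y -> Prop, subgroup L -> finite_index L H ->
    minimal_inj L U.
Proof.
move=> Gji Gnva infraH [injU minU] L sL fiL; split.
  by move=> h h' Lh Lh'; apply: injU; apply: fiL.1.
move=> V VU injV; apply: (minU V VU).
exact: psi_inj_on_of_finite_index Gji Gnva infraH sL fiL injV.
Qed.
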